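(* Let $(a_k)_{k\ge 0}$ and $(\lambda_k)_{k\ge 1}$ be complex numbers, and define $\mu_0=1$ and, for $n\ge 1$, $\mu_n=\sum_{\pi\in\mathcal{M}_n} v(\pi)$. Let $(c_n)_{n\ge1}$ be the free cumulants of $(\mu_n)$. Then for every $n\ge 2$, $$c_n=\sum_{\pi\in\mathcal{M}_n}\frac{(-1)^{|\pi|_0-1}}{n-1}\binom{n-1}{|\pi|_0}\,v(\pi).$$ (In particular the path consisting of $n$ horizontal steps contributes $0$, since then $|\pi|_0=n$.)
   Context: A Motzkin path of length $n$ is a sequence of integers $\pi=(\pi(0),\pi(1),\dots,\pi(n))$ with $\pi(0)=\pi(n)=0$, $\pi(i)\ge 0$ for all $i$, and $\pi(i)-\pi(i-1)\in\{1,0,-1\}$ for $i=1,\dots,n$ (rising, horizontal, falling step respectively). $\mathcal{M}_n$ denotes the set of Motzkin paths of length $n$. The valuation of a path is $v(\pi)=\prod_{i=1}^n v_i$, where $v_i=1$ if the $i$-th step rises, $v_i=a_{\pi(i-1)}$ if the $i$-th step is horizontal, and $v_i=\lambda_{\pi(i-1)}$ if the $i$-th step falls. $|\pi|_0$ denotes the number of returns to zero of $\pi$, i.e. the number of indices $i\in\{1,\dots,n\}$ with $\pi(i)=0$. Free cumulants: with $M(z)=1+\sum_{n\ge1}\mu_n z^n$ (formal power series), the free cumulants $c_n$ are the coefficients of the formal power series $C(z)=1+\sum_{n\ge1}c_nz^n$ uniquely determined by $C(zM(z))=M(z)$. *)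

From HB Require Import structures.
From mathcomp Require Import all_boot all_order all_algebra.
From mathcomp Require Import complex.
From mathcomp Require Import reals.
Set Implicit Arguments. Unset Strict Implicit. Unset Printing Implicit Defensive.
Import Order.TTheory GRing.Theory Num.Theory.
Local Open Scope ring_scope.

(* A path of length n is encoded by its height function k |-> pi(k), k = 0..n.
   Heights are natural numbers (so pi(i) >= 0 is built in); they are stored in
   'I_n.+1, which loses nothing since a Motzkin path of length n never exceeds
   height n. *)
Definition mpath (n : nat) := {ffun 'I_n.+1 -> 'I_n.+1}.

Definition ht (n : nat) (p : mpath n) (k : nat) : nat := p (inord k).

Definition is_motzkin (n : nat) (p : mpath n) : bool :=
  [&& ht p 0 == 0%N, ht p n == 0%N &
      [forall i : 'I_n,
         [|| ht p i.+1 == (ht p i).+1,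
             ht p i.+1 == ht p i |
             (ht p i.+1).+1 == ht p i]]].

Definition motzkin_paths (n : nat) : {set mpath n} := [set p | is_motzkin p].

(* weight of the i-th step (i = 1..n), encoded via step index i = j.+1 *)
Definition step_weight (C : ringType) (a lam : nat -> C) (n : nat) (p : mpath n)
    (j : nat) : C :=
  if ht p j.+1 == (ht p j).+1 then 1
  else if ht p j.+1 == ht p j then a (ht p j)
  else lam (ht p j).

Definition valuation (C : ringType) (a lam : nat -> C) (n : nat) (p : mpath n) : C :=
  \prod_(j < n) step_weight a lam p j.

Definition returns0 (n : nat) (p : mpath n) : nat :=
  #|[set j : 'I_n | ht p j.+1 == 0%N]|.

Definition moment (C : ringType) (a lam : nat -> C) (n : nat) : C :=
  if n is 0 then 1 else \sum_(p in motzkin_paths n) valuation a lam p.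

(* (c_n) are the free cumulants of (mu_n): with M(z) = sum_n mu_n z^n (mu_0 = 1)
   and C(z) = 1 + sum_{n>=1} c_n z^n, we have C(z M(z)) = M(z) as formal power
   series.  Coefficient N of C(zM(z)) only involves c_0..c_N and mu_0..mu_N,
   so the identity is expressed coefficientwise via polynomial truncations. *)
Definition trunc_series (C : ringType) (u : nat -> C) (N : nat) : {poly C} :=
  \sum_(i < N.+1) u i *: 'X^i.

Definition is_free_cumulants (C : comRingType) (mu c : nat -> C) : Prop :=
  c 0%N = 1 /\
  forall N : nat,
    (\sum_(k < N.+1) c k *: ('X * trunc_series mu N) ^+ k)`_N = mu N.

From HB Require Import structures.
From mathcomp Require Import all_boot all_order all_algebra.
From mathcomp Require Import complex.
From mathcomp Require Import reals.
From mathcomp Require Import ring zify.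
Set Implicit Arguments. Unset Strict Implicit. Unset Printing Implicit Defensive.
Import Order.TTheory GRing.Theory Num.Theory.
Local Open Scope ring_scope.

(* Cutting a Motzkin path at its returns to zero shows that the weighted
   paths with r returns have generating series B^r, where B is the series of
   primitive paths (those returning to zero only at the end); hence
   M = 1/(1 - B).  Put P = 1 - B, so that P M = 1 and C(zM) = M.  Computing
   [z^(n-1)] (C(zM))' P^n in two ways, as in the proof of Lagrange inversion,
   gives n c_n on one side and, since P M' = -P' M, the value
   -n/(n-1) [z^n] P^(n-1) on the other.  Expanding (1 - B)^(n-1) binomially
   and reading [z^n] B^r as the weight of the paths with r returns yields the
   formula. *)

Section TruncatedCongruence.
Variable R : nzRingType.
Implicit Types p q r : {poly R}.

Definition eqXn m p q := forall i, (i < m)%N -> p`_i = q`_i.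

Lemma eqXn_trans m p q r : eqXn m p q -> eqXn m q r -> eqXn m p r.
Proof. by move=> pq qr i lt_im; rewrite pq // qr. Qed.

Lemma eqXnW m m' p q : (m' <= m)%N -> eqXn m p q -> eqXn m' p q.
Proof. by move=> le_m'm pq i lt_im'; apply: pq; apply: leq_trans le_m'm. Qed.

Lemma eqXnD m p p' q q' : eqXn m p p' -> eqXn m q q' -> eqXn m (p + q) (p' + q').
Proof. by move=> pp' qq' i lt_im; rewrite !coefD pp' // qq'. Qed.

Lemma eqXnM m p p' q q' : eqXn m p p' -> eqXn m q q' -> eqXn m (p * q) (p' * q').
Proof.
move=> pp' qq' i lt_im; rewrite !coefM; apply: eq_bigr => j _.
rewrite pp' ?qq' //; last exact: leq_ltn_trans (leq_ord j) lt_im.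
exact: leq_ltn_trans (leq_subr _ _) lt_im.
Qed.

Lemma eqXnMl m r p q : eqXn m p q -> eqXn m (r * p) (r * q).
Proof. exact: eqXnM. Qed.

Lemma eqXnMr m r p q : eqXn m p q -> eqXn m (p * r) (q * r).
Proof. by move/eqXnM; apply. Qed.

Lemma eqXnX m p q k : eqXn m p q -> eqXn m (p ^+ k) (q ^+ k).
Proof. by move=> pq; elim: k => [|k IHk] //; rewrite !exprS; apply: eqXnM. Qed.

Lemma eqXn_deriv m p q : eqXn m.+1 p q -> eqXn m p^`() q^`().
Proof. by move=> pq i lt_im; rewrite !coef_deriv pq. Qed.

Lemma eqXnXM m p q : eqXn m p q -> eqXn m.+1 ('X * p) ('X * q).
Proof. by move=> pq [|i] lt_im; rewrite !coefXM //= pq. Qed.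

End TruncatedCongruence.

Section DerivativeIdentities.
Variable R : comNzRingType.
Implicit Types P M : {poly R}.

Lemma coef_deriv_mul_exp P j i :
  (P^`() * P ^+ j)`_i *+ j.+1 = (P ^+ j.+1)`_i.+1 *+ i.+1.
Proof. by rewrite -coefMn -coef_deriv deriv_exp. Qed.

Lemma eqXn_deriv_inverse m P M :
  eqXn m.+1 (P * M) 1 -> eqXn m (P * M^`()) (- (P^`() * M)).
Proof.
move=> /eqXn_deriv PM1 i lt_im; apply/eqP; rewrite coefN -addr_eq0 addrC -coefD.
by rewrite -derivM PM1 // -polyC1 derivC coef0.
Qed.

Lemma coef_deriv_inverse_mul_exp k P M : eqXn k.+3 (P * M) 1 ->
  (M^`() * P ^+ k.+2)`_k.+1 *+ k.+1 = - (P ^+ k.+1)`_k.+2 *+ k.+2.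
Proof.
move=> PM1.
have E : eqXn k.+2 (M^`() * P ^+ k.+2) (- (P^`() * P ^+ k)).
  rewrite [X in eqXn _ X](_ : _ = P * M^`() * P ^+ k.+1); last by rewrite exprS; ring.
  apply: eqXn_trans (eqXnMr _ (eqXn_deriv_inverse PM1)) _.
  rewrite [X in eqXn _ X](_ : _ = - (P^`() * P ^+ k) * (P * M)); last by rewrite exprS; ring.
  by rewrite -[X in eqXn _ _ X]mulr1; apply/eqXnMl/(eqXnW _ PM1).
by rewrite E // coefN !mulNrn coef_deriv_mul_exp.
Qed.

End DerivativeIdentities.

Section LagrangeInversion.
Variable F : numDomainType.
Implicit Types P M : {poly F}.

Lemma coef_deriv_mul_exp_diag P j : (P^`() * P ^+ j)`_j = (P ^+ j.+1)`_j.+1.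
Proof.
apply: (mulIf (x := j.+1%:R)); first by rewrite pnatr_eq0.
by rewrite !mulr_natr coef_deriv_mul_exp.
Qed.

(* Modulo 'X^d.+1 the polynomial is P^d (1 - 'X P' M), whose two contributions
   to the coefficient of 'X^d cancel for d > 0 by coef_deriv_mul_exp_diag. *)
Lemma coef_lagrange_kernel j d P M : eqXn (j + d).+2 (P * M) 1 ->
  (M ^+ j * P ^+ (j + d).+1 * (M + 'X * M^`()))`_d = (d == 0)%:R.
Proof.
move=> PM1.
have PMj : eqXn d.+1 (P ^+ j * M ^+ j) 1.
  by rewrite -exprMn -(expr1n _ j); apply/eqXnX/(eqXnW _ PM1); lia.
have E : eqXn d.+1 (M ^+ j * P ^+ (j + d).+1 * (M + 'X * M^`()))
                   (P ^+ d + 'X * (P ^+ d * - (P^`() * M))).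
  rewrite [X in eqXn _ X](_ : _ =
      P ^+ j * M ^+ j * (P ^+ d * (P * M) + 'X * (P ^+ d * (P * M^`())))); last first.
    by rewrite exprS exprD; ring.
  rewrite -[X in eqXn _ _ X]mul1r; apply: eqXnM PMj (eqXnD _ (eqXnXM _)).
    by rewrite -[X in eqXn _ _ X]mulr1; apply/eqXnMl/(eqXnW _ PM1); lia.
  by apply/eqXnMl/eqXn_deriv_inverse/(eqXnW _ PM1); lia.
rewrite E // coefD coefXM; case: d {PMj} E PM1 => [|e] _ PM1; first by rewrite expr0 coef1 addr0.
have E' : eqXn e.+1 (P ^+ e.+1 * - (P^`() * M)) (- (P^`() * P ^+ e)).
  rewrite [X in eqXn _ X](_ : _ = - (P^`() * P ^+ e) * (P * M)); last by rewrite exprS; ring.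
  by rewrite -[X in eqXn _ _ X]mulr1; apply/eqXnMl/(eqXnW _ PM1); lia.
by rewrite /= E' // coefN coef_deriv_mul_exp_diag subrr.
Qed.

Lemma coef_deriv_XM_exp m i P M : eqXn m.+2 (P * M) 1 ->
  ((('X * M) ^+ i)^`() * P ^+ m.+1)`_m = (i == m.+1)%:R *+ m.+1.
Proof.
move=> PM1; case: i => [|j]; first by rewrite expr0 -polyC1 derivC mul0r coef0 mul0rn.
rewrite deriv_exp derivM derivX mul1r exprMn /=.
have -> : (M + 'X * M^`()) * ('X^j * M ^+ j) *+ j.+1 * P ^+ m.+1 =
    'X^j * (M ^+ j * P ^+ m.+1 * (M + 'X * M^`())) *+ j.+1 by rewrite -!mulrnAl; ring.
rewrite coefMn coefXnM; case: ltnP => [lt_mj|le_jm].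
  by rewrite eqSS gtn_eqF //= !mul0rn.
move: PM1; rewrite -(subnKC le_jm) addKn; move: (m - j)%N => d PM1.
rewrite coef_lagrange_kernel // eqSS -{2}[j]addn0 eqn_add2l.
by case: d {PM1} => [|d]; rewrite ?addn0 //= !mul0rn.
Qed.

Lemma coef_deriv_cumulant_series k (c : nat -> F) P M :
  eqXn k.+3 (\sum_(i < k.+3) c i *: ('X * M) ^+ i) M -> eqXn k.+3 (P * M) 1 ->
  (M^`() * P ^+ k.+2)`_k.+1 = c k.+2 *+ k.+2.
Proof.
move=> CM PM1; rewrite -(eqXnMr _ (eqXn_deriv CM)) //.
rewrite raddf_sum mulr_suml coef_sum big_ord_recr /= big1 ?add0r => [|i _].
  by rewrite derivZ -scalerAl coefZ coef_deriv_XM_exp // eqxx mulr_natr.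
by rewrite derivZ -scalerAl coefZ coef_deriv_XM_exp // ltn_eqF // mul0rn mulr0.
Qed.

Lemma cumulant_lagrange k (c : nat -> F) P M :
  eqXn k.+3 (\sum_(i < k.+3) c i *: ('X * M) ^+ i) M -> eqXn k.+3 (P * M) 1 ->
  c k.+2 *+ k.+1 = - (P ^+ k.+1)`_k.+2.
Proof.
move=> CM PM1; apply: (mulIf (x := k.+2%:R)); first by rewrite pnatr_eq0.
rewrite !mulr_natr -mulrnA mulnC mulrnA -(coef_deriv_cumulant_series CM PM1).
exact: coef_deriv_inverse_mul_exp.
Qed.

End LagrangeInversion.

Definition next_heights (x : nat) : seq nat :=
  [:: x.+1, x & if x is x'.+1 then [:: x'] else [::]].
Arguments next_heights : simpl never.

Lemma mem_next_heights h x :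
  (h \in next_heights x) = [|| h == x.+1, h == x | h.+1 == x].
Proof. by case: x => [|x]; rewrite /next_heights !inE ?eqSS //= orbF. Qed.

Lemma next_heights_uniq x : uniq (next_heights x).
Proof. by case: x => [|x] //=; rewrite /next_heights /= !inE; apply/and3P; split; lia. Qed.

(* Motzkin prefixes of length n (paths from 0 not required to return), each
   stored as its list of n.+1 heights, last height first. *)
Fixpoint motzkin_prefixes (n : nat) : seq (seq nat) :=
  if n is n'.+1 then
    [seq h :: s | s <- motzkin_prefixes n', h <- next_heights (head 0%N s)]
  else [:: [:: 0%N]].

Lemma mem_motzkin_prefixesS n h s : (h :: s \in motzkin_prefixes n.+1) =
  (s \in motzkin_prefixes n) && (h \in next_heights (head 0%N s)).
Proof.
apply/allpairsPdep/andP => [[t [g [ts tg [-> ->]]]] //|[ts sh]].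
by exists s, h.
Qed.

Lemma nil_notin_motzkin_prefixes n : [::] \notin motzkin_prefixes n.
Proof. by case: n => [|n] //; apply/allpairsPdep => -[s [h []]]. Qed.

Lemma motzkin_prefixes_uniq n : uniq (motzkin_prefixes n).
Proof.
elim: n => [|n IHn] //=.
have := @allpairs_uniq_dep _ (fun=> nat) _ (fun s h => h :: s) (motzkin_prefixes n)
  (fun s => next_heights (head 0%N s)).
by apply=> // [s _|[s h] [t g] _ _ [-> ->]] //; apply: next_heights_uniq.
Qed.

Lemma motzkin_prefixes_size n s : s \in motzkin_prefixes n -> size s = n.+1.
Proof.
elim: n s => [|n IHn] s; first by rewrite inE => /eqP ->.
case: s => [|h s]; first by rewrite (negbTE (nil_notin_motzkin_prefixes _)).
by rewrite mem_motzkin_prefixesS => /andP [/IHn /= ->].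
Qed.

Lemma motzkin_prefixes_bound n s x : s \in motzkin_prefixes n -> x \in s -> (x <= n)%N.
Proof.
elim: n s x => [|n IHn] s x; first by rewrite inE => /eqP -> /[!inE] /eqP ->.
case: s => [|h s]; first by rewrite (negbTE (nil_notin_motzkin_prefixes _)).
rewrite mem_motzkin_prefixesS in_cons => /andP [ts sh] /orP [/eqP ->|xs].
  have hs : (head 0%N s <= n)%N.
    case: s ts {sh} => [|y s] ts; last by apply: IHn ts _; rewrite mem_head.
    by rewrite (negbTE (nil_notin_motzkin_prefixes _)) in ts.
  by move: sh; rewrite mem_next_heights; lia.
exact/leqW/(IHn s x).
Qed.

Fixpoint rev_heights (f : nat -> nat) (k : nat) : seq nat :=
  if k is k'.+1 then f k :: rev_heights f k' else [:: f 0%N].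

Lemma head_rev_heights f k : head 0%N (rev_heights f k) = f k.
Proof. by case: k. Qed.

Lemma eq_rev_heights f g k :
  (forall i, (i <= k)%N -> f i = g i) -> rev_heights f k = rev_heights g k.
Proof.
elim: k => [|k IHk] fg /=; first by rewrite fg.
by rewrite fg // IHk // => i le_ik; apply/fg/leqW.
Qed.

Lemma rev_heights_inj f g k :
  rev_heights f k = rev_heights g k -> forall i, (i <= k)%N -> f i = g i.
Proof.
elim: k => [|k IHk] /= [fg]; first by move=> i; rewrite leqn0 => /eqP ->.
by move=> fgk i; rewrite leq_eqVlt => /orP [/eqP ->|/IHk]; last exact.
Qed.

Lemma rev_heights_nth n s :
  size s = n.+1 -> rev_heights (fun k => nth 0%N s (n - k)) n = s.
Proof.
elim: n s => [|n IHn] [|h s] //= [sz]; first by case: s sz.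
rewrite subnn; congr (_ :: _); rewrite -[RHS](IHn s sz).
by apply: eq_rev_heights => i le_in; rewrite subSn.
Qed.

Lemma rev_heights_prefixP n f :
  reflect (f 0%N = 0%N /\ forall i, (i < n)%N -> f i.+1 \in next_heights (f i))
          (rev_heights f n \in motzkin_prefixes n).
Proof.
elim: n => [|n IHn] /=; first by rewrite inE; apply: (iffP eqP) => [[->]|[->]].
rewrite mem_motzkin_prefixesS head_rev_heights.
apply: (iffP andP) => [[/IHn [f0 step] fn]|[f0 step]].
  by split=> // i; rewrite ltnS leq_eqVlt => /orP [/eqP ->|/step].
split; last exact: step.
by apply/IHn; split=> // i lt_in; apply/step/ltnW.
Qed.

Section PrefixWeights.
Variable C : comNzRingType.
Variables a lam : nat -> C.

Definition step_wt (x h : nat) : C :=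
  if h == x.+1 then 1 else if h == x then a x else lam x.

Fixpoint prefix_wt (s : seq nat) : C :=
  if s is h :: t then (if t is x :: _ then prefix_wt t * step_wt x h else 1) else 1.

Fixpoint prefix_returns (s : seq nat) : nat :=
  if s is h :: t then (if t is _ :: _ then prefix_returns t + (h == 0%N) else 0)
  else 0.

Lemma prefix_wt_rev_heights f k :
  prefix_wt (rev_heights f k) = \prod_(j < k) step_wt (f j) (f j.+1).
Proof.
elim: k => [|k IHk]; first by rewrite big_ord0.
by rewrite big_ord_recr /= -IHk -(head_rev_heights f k); case: k {IHk}.
Qed.

Lemma prefix_returns_rev_heights f k :
  prefix_returns (rev_heights f k) = (\sum_(j < k) (f j.+1 == 0%N))%N.
Proof.
elim: k => [|k IHk]; first by rewrite big_ord0.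
by rewrite big_ord_recr /= -IHk; case: k {IHk}.
Qed.

Definition motzkin_wt n h r : C :=
  \sum_(s <- motzkin_prefixes n | (head 0%N s == h) && (prefix_returns s == r))
    prefix_wt s.

Lemma motzkin_wt0 h r : motzkin_wt 0 h r = ((h == 0%N) && (r == 0%N))%:R.
Proof. by rewrite /motzkin_wt big_mkcond big_seq1 /= ![0%N == _]eq_sym; case: (_ && _). Qed.

Lemma motzkin_wtS n h r : motzkin_wt n.+1 h r =
  \sum_(s <- motzkin_prefixes n) \sum_(g <- next_heights (head 0%N s))
     (if (g == h) && (prefix_returns s + (g == 0%N) == r)%N
      then prefix_wt s * step_wt (head 0%N s) g else 0).
Proof.
rewrite /motzkin_wt big_mkcond big_allpairs_dep big_seq [RHS]big_seq.
apply: eq_bigr => -[|x s] xs; last by apply: eq_bigr.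
by rewrite (negbTE (nil_notin_motzkin_prefixes _)) in xs.
Qed.

Lemma big_next_heights (G : nat -> C) x :
  \sum_(g <- next_heights x) G g = G x.+1 + G x + (if x is x'.+1 then G x' else 0).
Proof. by case: x => [|x]; rewrite /next_heights !big_cons ?big_nil ?addr0 ?addrA. Qed.

Lemma step_wt_up x : step_wt x x.+1 = 1.
Proof. by rewrite /step_wt eqxx. Qed.

Lemma step_wt_flat x : step_wt x x = a x.
Proof. by rewrite /step_wt ltn_eqF ?eqxx. Qed.

Lemma step_wt_down x : step_wt x.+1 x = lam x.+1.
Proof. by rewrite /step_wt !ltn_eqF. Qed.

Lemma sum_next_heights_pos x h (rho r : nat) (w : C) :
  \sum_(g <- next_heights x)
     (if (g == h.+1) && (rho + (g == 0%N) == r)%N then w * step_wt x g else 0) =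
  (if (x == h) && (rho == r) then w else 0)
  + (if (x == h.+1) && (rho == r) then w * a h.+1 else 0)
  + (if (x == h.+2) && (rho == r) then w * lam h.+2 else 0).
Proof.
rewrite big_next_heights eqSS addn0 step_wt_up mulr1; congr (_ + _ + _).
  by case: eqP => [->|] //=; rewrite addn0 step_wt_flat.
by case: x => [|x] //; rewrite eqSS; case: eqP => [->|] //=; rewrite addn0 step_wt_down.
Qed.

Lemma sum_next_heights_zero x (rho r : nat) (w : C) :
  \sum_(g <- next_heights x)
     (if (g == 0%N) && (rho + (g == 0%N) == r)%N then w * step_wt x g else 0) =
  (if (x == 0%N) && (rho.+1 == r) then w * a 0 else 0)
  + (if (x == 1%N) && (rho.+1 == r) then w * lam 1 else 0).
Proof.
rewrite big_next_heights /= add0r; congr (_ + _).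
  by case: eqP => [->|] //=; rewrite addn1 step_wt_flat.
by case: x => [|x] //; rewrite eqSS; case: eqP => [->|] //=; rewrite addn1 step_wt_down.
Qed.

Lemma sum_if_mulr (I : Type) (l : seq I) (P : pred I) (f : I -> C) k :
  \sum_(i <- l) (if P i then f i * k else 0) = (\sum_(i <- l | P i) f i) * k.
Proof.
rewrite [X in _ = X * _]big_mkcond mulr_suml.
by apply: eq_bigr => i _; case: ifP; rewrite ?mul0r.
Qed.

Lemma motzkin_wt_pos n h r : motzkin_wt n.+1 h.+1 r =
  motzkin_wt n h r + motzkin_wt n h.+1 r * a h.+1 + motzkin_wt n h.+2 r * lam h.+2.
Proof.
rewrite motzkin_wtS (eq_bigr _ (fun s _ => sum_next_heights_pos _ _ _ _ _)).
by rewrite !big_split /= !sum_if_mulr -big_mkcond.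
Qed.

Lemma motzkin_wt_returnS n r :
  motzkin_wt n.+1 0 r.+1 = motzkin_wt n 0 r * a 0 + motzkin_wt n 1 r * lam 1.
Proof.
rewrite motzkin_wtS (eq_bigr _ (fun s _ => sum_next_heights_zero _ _ _ _)).
by rewrite big_split /= !sum_if_mulr.
Qed.

Lemma motzkin_wt_return0 n : motzkin_wt n.+1 0 0 = 0.
Proof.
rewrite motzkin_wtS (eq_bigr _ (fun s _ => sum_next_heights_zero _ _ _ _)).
by rewrite big1 // => s _; rewrite !andbF addr0.
Qed.

Lemma motzkin_wt0S h r : motzkin_wt 0 h r.+1 = 0.
Proof. by rewrite motzkin_wt0 andbF. Qed.

(* Cutting at the last return to zero: what follows it is a path of length
   n - j.+1 from 0 to h that never returns. *)
Lemma motzkin_wt_last_return n h r :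
  motzkin_wt n h r.+1 = \sum_(j < n) motzkin_wt j.+1 0 r.+1 * motzkin_wt (n - j.+1) h 0.
Proof.
elim: n h => [|n IHn] h; first by rewrite motzkin_wt0S big_ord0.
rewrite big_ord_recr /= subnn.
have shift (j : 'I_n) : (n.+1 - j.+1 = (n - j.+1).+1)%N by have := ltn_ord j; lia.
case: h => [|h].
  rewrite motzkin_wt0 eqxx mulr1 big1 ?add0r // => j _.
  by rewrite shift motzkin_wt_return0 mulr0.
rewrite motzkin_wt0 /= mulr0 addr0 motzkin_wt_pos !IHn !big_distrl -!big_split /=.
by apply: eq_bigr => j _; rewrite shift motzkin_wt_pos; ring.
Qed.

Lemma motzkin_wt_returns n r : motzkin_wt n.+1 0 r.+1 =
  \sum_(j < n.+1) motzkin_wt j 0 r * motzkin_wt (n.+1 - j) 0 1.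
Proof.
rewrite big_ord_recl /= subn0; case: r => [|r].
  by rewrite motzkin_wt0 mul1r big1 ?addr0 // => j _; rewrite motzkin_wt_return0 mul0r.
rewrite motzkin_wt0S mul0r add0r motzkin_wt_returnS !motzkin_wt_last_return.
rewrite !big_distrl -big_split /=; apply: eq_bigr => j _.
rewrite /bump /= add1n subSS -(subnSK (ltn_ord j)) (motzkin_wt_returnS (n - j.+1)); ring.
Qed.

(* Truncation at order L of the generating series of primitive paths, i.e.
   Motzkin paths whose only return to zero is at the end. *)
Definition primitive_series L : {poly C} := \poly_(i < L.+1) motzkin_wt i 0 1.

Lemma coef_primitive_series_exp L r n : (n <= L)%N ->
  ((primitive_series L) ^+ r)`_n = motzkin_wt n 0 r.
Proof.
elim: r n => [|r IHr] n le_nL.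
  by rewrite expr0 coef1; case: n le_nL => [|n] _; rewrite ?motzkin_wt0 ?motzkin_wt_return0.
rewrite exprSr coefM (eq_bigr (fun j : 'I_n.+1 => motzkin_wt j 0 r * motzkin_wt (n - j) 0 1)).
  case: n le_nL => [|n] _; first by rewrite big_ord1 !motzkin_wt0S mulr0.
  by rewrite motzkin_wt_returns big_ord_recr /= subnn motzkin_wt0S mulr0 addr0.
move=> j _; rewrite IHr ?coef_poly; last exact: leq_trans (leq_ord j) le_nL.
by rewrite ltnS (leq_trans (leq_subr _ _) le_nL).
Qed.

End PrefixWeights.

Section MotzkinPaths.
Variable C : comNzRingType.
Variables a lam : nat -> C.
Variable n : nat.
Implicit Types p q : mpath n.

Definition path_heights p : seq nat := rev_heights (ht p) n.

Lemma path_heights_inj : injective path_heights.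
Proof.
move=> p q /rev_heights_inj pq; apply/ffunP => i; apply: val_inj.
by have := pq i (ltn_ord i); rewrite /ht inord_val.
Qed.

Lemma valuation_path_heights p : valuation a lam p = prefix_wt a lam (path_heights p).
Proof. by rewrite /valuation prefix_wt_rev_heights. Qed.

Lemma returns0_path_heights p : returns0 p = prefix_returns (path_heights p).
Proof.
rewrite /returns0 prefix_returns_rev_heights -sum1dep_card big_mkcond /=.
by apply: eq_bigr => j _; case: eqP.
Qed.

Lemma motzkin_pathsE p : (p \in motzkin_paths n) =
  (head 0%N (path_heights p) == 0%N) && (path_heights p \in motzkin_prefixes n).
Proof.
rewrite inE /is_motzkin head_rev_heights andbCA; congr (_ && _).
apply/andP/rev_heights_prefixP => [[/eqP h0 /forallP step]|[h0 step]].
  by split=> // i lt_in; rewrite mem_next_heights; apply: (step (Ordinal lt_in)).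
by split; [apply/eqP|apply/forallP => i; rewrite -mem_next_heights; apply: step].
Qed.

Lemma perm_path_heights :
  perm_eq [seq path_heights p | p in motzkin_paths n]
          [seq s <- motzkin_prefixes n | head 0%N s == 0%N].
Proof.
apply: uniq_perm; first by rewrite map_inj_uniq ?enum_uniq //; apply: path_heights_inj.
  by rewrite filter_uniq // motzkin_prefixes_uniq.
move=> s; rewrite mem_filter; apply/imageP/andP => [[p]|[s0 sP]].
  by rewrite motzkin_pathsE => /andP [s0 sP] ->.
pose p : mpath n := [ffun i : 'I_n.+1 => inord (nth 0%N s (n - i))].
have ht_p k : (k <= n)%N -> ht p k = nth 0%N s (n - k).
  move=> le_kn; rewrite /ht ffunE (@inordK n k) ?ltnS // inordK // ltnS.
  have [lt_ks|le_sk] := ltnP (n - k) (size s).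
    exact: motzkin_prefixes_bound sP (mem_nth _ lt_ks).
  by rewrite nth_default.
have sE : path_heights p = s.
  by rewrite -[RHS](rev_heights_nth (motzkin_prefixes_size sP)); apply: eq_rev_heights.
by exists p; rewrite // motzkin_pathsE sE s0.
Qed.

Lemma sum_motzkin_paths_returns r :
  \sum_(p in motzkin_paths n | returns0 p == r) valuation a lam p = motzkin_wt a lam n 0 r.
Proof.
rewrite /motzkin_wt -[RHS]big_filter_cond -(perm_big _ perm_path_heights) big_image_cond /=.
by apply: eq_big => [p|p _]; rewrite (returns0_path_heights, valuation_path_heights).
Qed.

End MotzkinPaths.

Section MomentSeries.
Variable C : comNzRingType.

Lemma coef_exp_small (p : {poly C}) r N : p`_0 = 0 -> (N < r)%N -> (p ^+ r)`_N = 0.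
Proof.
move=> p0; elim: r N => [|r IHr] N // lt_Nr; rewrite exprSr coefM big1 // => j _.
have [lt_jr|le_rj] := ltnP j r; first by rewrite IHr ?mul0r.
have -> : j = N :> nat by apply/eqP; rewrite eqn_leq -ltnS ltn_ord -ltnS (leq_trans lt_Nr).
by rewrite subnn p0 mulr0.
Qed.

Lemma coef_trunc_series (u : nat -> C) n i : (i <= n)%N -> (trunc_series u n)`_i = u i.
Proof. by move=> le_in; rewrite /trunc_series -poly_def coef_poly ltnS le_in. Qed.

Lemma eqXn_cumulant_series (mu c : nat -> C) n : is_free_cumulants mu c ->
  eqXn n.+1 (\sum_(i < n.+1) c i *: ('X * trunc_series mu n) ^+ i) (trunc_series mu n).
Proof.
move=> [_ cum] N; rewrite ltnS => le_Nn; rewrite coef_trunc_series // -cum !coef_sum.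
have TnN : eqXn N (trunc_series mu n) (trunc_series mu N).
  by move=> j lt_jN; rewrite !coef_trunc_series // ltnW // (leq_trans lt_jN).
rewrite (big_ord_widen n.+1 (fun i => (c i *: ('X * trunc_series mu N) ^+ i)`_N)) //.
rewrite [RHS]big_mkcond /=; apply: eq_bigr => i _; rewrite !coefZ (eqXnX i (eqXnXM TnN)) //.
by case: ltnP => // lt_Ni; rewrite exprMn coefXnM lt_Ni mulr0.
Qed.

Variables a lam : nat -> C.

Lemma returns0_le n (p : mpath n) : (returns0 p <= n)%N.
Proof. by rewrite /returns0 (leq_trans (max_card _)) ?card_ord. Qed.

Lemma sum_motzkin_paths_by_returns n (G : nat -> C) :
  \sum_(p in motzkin_paths n) G (returns0 p) * valuation a lam p =
  \sum_(r < n.+1) G r * motzkin_wt a lam n 0 r.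
Proof.
rewrite (partition_big (fun p => inord (returns0 p) : 'I_n.+1) xpredT) //=.
apply: eq_bigr => r _; rewrite -sum_motzkin_paths_returns mulr_sumr.
have retE (p : mpath n) : (inord (returns0 p) == r :> 'I_n.+1) = (returns0 p == r).
  by rewrite -(inj_eq val_inj) /= inordK // ltnS returns0_le.
by apply: eq_big => [p|p /andP [_]]; rewrite retE // => /eqP ->.
Qed.

Lemma moment_by_returns N : moment a lam N = \sum_(r < N.+1) motzkin_wt a lam N 0 r.
Proof.
case: N => [|N]; first by rewrite big_ord1 motzkin_wt0.
have := sum_motzkin_paths_by_returns N.+1 (fun=> 1).
by under eq_bigr do rewrite mul1r; under [in RHS]eq_bigr do rewrite mul1r.
Qed.

Lemma eqXn_moment_series_inverse n :
  eqXn n.+1 ((1 - primitive_series a lam n) * trunc_series (moment a lam) n) 1.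
Proof.
set B := primitive_series a lam n.
have B0 : B`_0 = 0 by rewrite coef_poly motzkin_wt0S.
apply: (@eqXn_trans _ _ _ ((1 - B) * \sum_(r < n.+1) B ^+ r)).
  apply: eqXnMl => N; rewrite ltnS => le_Nn.
  rewrite coef_trunc_series // moment_by_returns coef_sum.
  rewrite (big_ord_widen n.+1 (fun r => motzkin_wt a lam N 0 r)) // [LHS]big_mkcond /=.
  apply: eq_bigr => r _; rewrite coef_primitive_series_exp //.
  by case: ltnP => // lt_Nr; rewrite -(coef_primitive_series_exp a lam r le_Nn) coef_exp_small.
rewrite -opprB mulNr -subrX1 opprB => N lt_Nn.
by rewrite coefB coef_exp_small // subr0.
Qed.

Lemma coef_one_sub_primitive_exp L m n : (n <= L)%N ->
  ((1 - primitive_series a lam L) ^+ m)`_n =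
  \sum_(i < m.+1) (-1) ^+ i * motzkin_wt a lam n 0 i *+ 'C(m, i).
Proof.
move=> le_nL; rewrite exprBn coef_sum; apply: eq_bigr => i _.
have -> : (-1) ^+ i = ((-1) ^+ i)%:P :> {poly C} by rewrite polyC_exp polyCN.
by rewrite coefMn expr1n mulr1 coefCM coef_primitive_series_exp.
Qed.

End MomentSeries.

Theorem mainTheorem1 (R : realType) (a lam c : nat -> R[i]) :
  is_free_cumulants (moment a lam) c ->
  forall n : nat, (2 <= n)%N ->
    c n = \sum_(p in motzkin_paths n)
            ((-1) ^+ (returns0 p).-1 / (n.-1)%:R
              * ('C(n.-1, returns0 p))%:R * valuation a lam p).
Proof.
move=> cum_c [|[|k]] // _.
have := cumulant_lagrange (eqXn_cumulant_series (n := k.+2) cum_c)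
                          (eqXn_moment_series_inverse a lam (n := k.+2)).
rewrite coef_one_sub_primitive_exp // => ck.
rewrite (sum_motzkin_paths_by_returns a lam _ (fun r => (-1) ^+ r.-1 / k.+1%:R * 'C(k.+1, r)%:R)).
rewrite big_ord_recr /= bin_small // mulr0 mul0r addr0.
apply: (mulIf (x := k.+1%:R)); first by rewrite pnatr_eq0.
rewrite mulr_natr ck mulr_suml -sumrN; apply: eq_bigr => -[[|i] lt_ik] _ /=.
  by rewrite motzkin_wt_return0 !(mulr0, mul0r, mul0rn, oppr0).
by rewrite exprS mulN1r -mulr_natr; field; rewrite addrC natr1 pnatr_eq0.
Qed.
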